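(* Let $k$ be a field of characteristic zero, $n-h\ge 1$, $h\ge 0$, $a\ge 0$, and let $D\subset\mathbb{P}^{n-h}\times\mathbb{P}^h$ be an integral divisor of bidegree $(1,a)$ defined over $k$. Then $D$ is unirational over $k$.
   Context: Unirational over $k$ means admitting a dominant rational map from a projective space over $k$ of the same dimension. *)

From HB Require Import structures.
From mathcomp Require Import all_boot all_order all_algebra.
From mathcomp Require Import mpoly.
Set Implicit Arguments. Unset Strict Implicit. Unset Printing Implicit Defensive.
Import GRing.Theory.
Local Open Scope ring_scope.

(* Ambient space P^m x P^h  (m = n - h) with bihomogeneous coordinates
   x_0..x_m (indices lshift) and y_0..y_h (indices rshift) in
   the polynomial ring k[x_0..x_m, y_0..y_h] = {mpoly k[m.+1 + h.+1]}. *)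

Definition xdeg (m h : nat) (mon : 'X_{1..(m.+1 + h.+1)}) : nat :=
  (\sum_(i < m.+1) mon (lshift h.+1 i))%N.
Definition ydeg (m h : nat) (mon : 'X_{1..(m.+1 + h.+1)}) : nat :=
  (\sum_(j < h.+1) mon (rshift m.+1 j))%N.

Definition bihomog (k : fieldType) (m h d e : nat)
    (G : {mpoly k[m.+1 + h.+1]}) : Prop :=
  forall mon, mon \in msupp G -> xdeg mon = d /\ ydeg mon = e.

(* Irreducibility in the polynomial ring over a field: non-constant and
   every factorization has a constant (= unit, as it is then nonzero) factor. *)
Definition mpoly_irreducible (k : fieldType) (N : nat) (F : {mpoly k[N]}) : Prop :=
  (1 < msize F)%N /\
  forall p q : {mpoly k[N]}, F = p * q -> (msize p <= 1)%N \/ (msize q <= 1)%N.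

Definition integral_divisor (k : fieldType) (m h a : nat)
    (F : {mpoly k[m.+1 + h.+1]}) : Prop :=
  bihomog 1 a F /\ mpoly_irreducible F.

(* A rational map P^(n-1) --> P^m x P^h defined over k (source coordinates
   t_0..t_(n-1), i.e. {mpoly k[n]}), given by a tuple of homogeneous forms of a
   common degree dx for the x-part (not all zero) and of a common degree dy
   for the y-part (not all zero). *)
Definition rat_map_to_biproj (k : fieldType) (n m h : nat)
    (phix : m.+1.-tuple {mpoly k[n]}) (phiy : h.+1.-tuple {mpoly k[n]}) : Prop :=
  exists dx dy : nat,
    (forall i, tnth phix i \is dx.-homog) /\ (exists i, tnth phix i != 0) /\
    (forall j, tnth phiy j \is dy.-homog) /\ (exists j, tnth phiy j != 0).

Definition pullback (k : fieldType) (n m h : nat)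
    (phix : m.+1.-tuple {mpoly k[n]}) (phiy : h.+1.-tuple {mpoly k[n]})
    (G : {mpoly k[m.+1 + h.+1]}) : {mpoly k[n]} :=
  comp_mpoly (cat_tuple phix phiy) G.

(* The rational map is dominant onto D = V(F) (F irreducible): the
   bihomogeneous forms vanishing on its image are exactly those vanishing on D,
   i.e. the multiples of F. *)
Definition dominant_onto (k : fieldType) (n m h : nat)
    (phix : m.+1.-tuple {mpoly k[n]}) (phiy : h.+1.-tuple {mpoly k[n]})
    (F : {mpoly k[m.+1 + h.+1]}) : Prop :=
  pullback phix phiy F = 0 /\
  forall (d e : nat) (G : {mpoly k[m.+1 + h.+1]}),
    bihomog d e G -> pullback phix phiy G = 0 ->
    exists Q : {mpoly k[m.+1 + h.+1]}, G = F * Q.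

(* D = V(F) subset P^m x P^h (of dimension m + h - 1) is unirational over k:
   there is a dominant rational map P^(m+h-1) --> D defined over k. *)
Definition unirational_divisor (k : fieldType) (m h : nat)
    (F : {mpoly k[m.+1 + h.+1]}) : Prop :=
  exists (phix : m.+1.-tuple {mpoly k[m + h]}) (phiy : h.+1.-tuple {mpoly k[m + h]}),
    rat_map_to_biproj phix phiy /\ dominant_onto phix phiy F.

From HB Require Import structures.
From mathcomp Require Import all_boot all_order all_algebra.
From mathcomp Require Import mpoly.
From Stdlib Require Import Classical.
From mathcomp Require Import zify ring.
Set Implicit Arguments. Unset Strict Implicit. Unset Printing Implicit Defensive.
Import GRing.Theory.
Local Open Scope ring_scope.

(* Write x_0..x_m, y_0..y_h for the coordinates.  As F has degree one in the
   x's, F = sum_j x_j g_j(y) with g_j forms of degree a; fix i0 with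
   g_i0 != 0.  Over a point y the fibre of D is the hyperplane
   sum_j x_j g_j(y) = 0, which we parametrize linearly.  With source
   coordinates t_0..t_(m+h-1), put y = (t_0..t_h), take linear forms u with
   u_i0 = 0 and the other u_i equal to t_h..t_(m+h-1), and set
       x = g_i0(y) u - (sum_j u_j g_j(y)) e_i0,
   so that F(x, y) = 0.  For dominance we compose with an explicit map psi
   from the ambient space to the source: up to a nonzero factor, phi o psi is
   (x, y) |-> (w, y) with w congruent to g_i0(y) x modulo F.  Hence if a
   bihomogeneous G vanishes along phi, F divides g_i0(y)^d G; as F is prime
   and does not divide g_i0(y), a form in y alone, F divides G. *)

Section FactorialDomain.
Variable A : idomainType.
Implicit Types a b c p : A.

Definition divides a b := exists c, b = a * c.

Definition irreducible_elt p := [/\ p != 0, p \isn't a GRing.unit &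
  forall a b, p = a * b -> a \is a GRing.unit \/ b \is a GRing.unit].

Definition prime_elt p := [/\ p != 0, p \isn't a GRing.unit &
  forall a b, divides p (a * b) -> divides p a \/ divides p b].

(* An additive size: it adds up on products of nonzero elements and vanishes
   exactly on units, so that factoring an element must terminate. *)
Definition additive_size (mu : A -> nat) :=
  (forall a b, a != 0 -> b != 0 -> mu (a * b) = (mu a + mu b)%N) /\
  (forall a, a != 0 -> (mu a == 0%N) = (a \is a GRing.unit)).

(* A factorial (unique factorization) domain: factorizations into
   irreducibles exist (witnessed by an additive size) and irreducibles are
   prime. *)
Definition factorial_domain :=
  (forall p, irreducible_elt p -> prime_elt p) /\ exists mu, additive_size mu.

Lemma divides_mull a b c : divides a b -> divides a (c * b).
Proof. by case=> d ->; exists (c * d); rewrite mulrCA. Qed.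

Lemma divides_add a b c : divides a b -> divides a c -> divides a (b + c).
Proof. by case=> x -> [y ->]; exists (x + y); rewrite mulrDr. Qed.

Lemma divides_opp a b : divides a b -> divides a (- b).
Proof. by case=> x ->; exists (- x); rewrite mulrN. Qed.

Lemma prime_divides_exp p a d : prime_elt p -> divides p (a ^+ d) -> divides p a.
Proof.
case=> _ pu pP; elim: d => [|d IH]; last by rewrite exprS => /pP [].
by rewrite expr0 => -[c c1]; case/negP: pu; apply/unitrPr; exists c.
Qed.

Section SizedDomain.
Variable mu : A -> nat.
Hypothesis mu_size : additive_size mu.

Lemma irreducible_factor a : a != 0 -> a \isn't a GRing.unit ->
  exists p c, [/\ irreducible_elt p, a = p * c, c != 0 & (mu c < mu a)%N].
Proof.
have [muM muU] := mu_size; have [n] := ubnP (mu a); elim: n a => // n IH a.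
rewrite ltnS => le_mu a0 a_nu.
have {}IH b : (mu b < n)%N -> b != 0 -> b \isn't a GRing.unit ->
    exists p c, [/\ irreducible_elt p, b = p * c, c != 0 & (mu c < mu b)%N].
  exact: IH.
 have [a_irr|a_red] := classic (irreducible_elt a).
  have mu1 : mu 1 = 0%N by apply/eqP; rewrite muU ?unitr1 ?oner_neq0.
  by exists a, 1; rewrite mulr1 oner_neq0 mu1 lt0n muU.
have [b [c [Eabc b_nu c_nu]]] : exists b c,
    [/\ a = b * c, b \isn't a GRing.unit & c \isn't a GRing.unit].
  apply: NNPP => nfact; apply: a_red; split=> // b c Eabc.
  have [bu|b_nu] := boolP (b \is a GRing.unit); first by left.
  have [cu|c_nu] := boolP (c \is a GRing.unit); first by right.
  by case: nfact; exists b, c.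
have b0 : b != 0 by apply: contraNneq a0; rewrite Eabc => ->; rewrite mul0r.
have c0 : c != 0 by apply: contraNneq a0; rewrite Eabc => ->; rewrite mulr0.
have mu_c : (0 < mu c)%N by rewrite lt0n muU.
have /IH /(_ b0 b_nu) [p [d [p_irr Ebpd d0 lt_d]]] : (mu b < n)%N.
  by move: le_mu; rewrite Eabc muM //; lia.
exists p, (d * c); split=> //; first by rewrite Eabc Ebpd mulrA.
  by rewrite mulf_neq0.
by rewrite Eabc muM // muM // ltn_add2r.
Qed.

Hypothesis irreducible_prime : forall p, irreducible_elt p -> prime_elt p.

Lemma nonzero_ind (P : A -> Prop) :
  (forall c, c \is a GRing.unit -> P c) ->
  (forall p c, prime_elt p -> c != 0 -> P c -> P (p * c)) ->
  forall c, c != 0 -> P c.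
Proof.
move=> Punit Pprime c; have [n] := ubnP (mu c); elim: n c => // n IH c.
rewrite ltnS => le_mu c0.
have [cu|c_nu] := boolP (c \is a GRing.unit); first exact: Punit.
have [p [d [p_irr Ec d0 lt_d]]] := irreducible_factor c0 c_nu.
rewrite Ec; apply: Pprime => //; first exact: irreducible_prime.
by apply: IH => //; apply: leq_trans lt_d le_mu.
Qed.

End SizedDomain.
End FactorialDomain.

Section GaussLemma.
Variable A : idomainType.
Implicit Types (f g r : {poly A}) (p c : A).

Lemma dividesC p f : p != 0 -> divides p%:P f <-> forall i, divides p f`_i.
Proof.
move=> p0; split=> [[g ->] i|pf]; first by rewrite coefCM; exists g`_i.
have pf' i : exists c, f`_i == p * c by case: (pf i) => c ->; exists c.
exists (\poly_(i < size f) xchoose (pf' i)); apply/polyP=> i.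
rewrite coefCM coef_poly; case: ltnP => [_|le_f]; first exact/eqP/(xchooseP (pf' i)).
by rewrite mulr0 nth_default.
Qed.

(* By induction on
   the sizes, peeling off the constant term of the factor whose constant term
   p divides. *)
Lemma prime_divides_coefs p f g : prime_elt p ->
  (forall i, divides p (f * g)`_i) ->
  (forall i, divides p f`_i) \/ (forall i, divides p g`_i).
Proof.
case=> _ _ pP; have [n] := ubnP (size f + size g); elim: n f g => // n IH f g.
rewrite ltnS => le_fg; wlog pf0 : f g le_fg / divides p f`_0.
  move=> W pfg; have := pfg 0%N; rewrite coef0M => /pP [] pd0; first exact: W.
  by rewrite or_comm; apply: W; rewrite 1?addnC // mulrC.
move=> pfg; set f' := drop_poly 1 f.
have Ef : f = (f`_0)%:P + 'X * f'.
  rewrite -{1}(poly_take_drop 1 f) mulrC expr1; congr (_ + _).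
  by apply/polyP=> i; rewrite coef_take_poly coefC; case: i.
have pf'g i : divides p (f' * g)`_i.
  have := pfg i.+1; rewrite {1}Ef mulrDl coefD coefCM -mulrA coefXM /=.
  case: pf0 => c ->; case=> d Ed; exists (d - c * g`_i.+1).
  by rewrite mulrBr mulrA -Ed addrAC subrr add0r.
have coefs_f i : divides p f'`_i.-1 -> divides p f`_i.
  by rewrite Ef coefD coefC coefXM; case: i => [_|i] /=; rewrite ?addr0 ?add0r.
have [f'0|f'_nz] := eqVneq f' 0.
  by left=> i; apply: coefs_f; rewrite f'0 coef0; exists 0; rewrite mulr0.
have /(IH _ g) [//|pf'|]: (size f' + size g < n)%N.
  move: le_fg f'_nz; rewrite -size_poly_eq0 size_drop_poly.
  by case: (size f) => //= s; lia.
- by left=> i; apply: coefs_f.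
- by right.
Qed.

Lemma prime_polyC p : prime_elt p -> prime_elt p%:P.
Proof.
move=> pp; have [p0 pu _] := pp; split; first by rewrite polyC_eq0.
  by rewrite poly_unitE size_polyC p0 /= coefC.
by move=> f g; rewrite !dividesC //; apply: prime_divides_coefs.
Qed.

Lemma unit_poly_size f : f \is a GRing.unit -> size f = 1%N.
Proof. by rewrite poly_unitE => /andP[/eqP]. Qed.

Definition poly_size (mu : A -> nat) f := ((size f).-1 + mu (lead_coef f))%N.

Lemma poly_size_additive mu : additive_size mu -> additive_size (poly_size mu).
Proof.
move=> [muM muU]; split=> [f g f0 g0|f f0].
  rewrite /poly_size size_mul // lead_coefM muM ?lead_coef_eq0 //.
  move: f0 g0; rewrite -!size_poly_eq0.
  by case: (size f) => // a; case: (size g) => // b _ _ /=; rewrite addnS /=; lia.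
rewrite /poly_size poly_unitE addn_eq0.
have : lead_coef f != 0 by rewrite lead_coef_eq0.
move: f0; rewrite -size_poly_eq0 /lead_coef.
by case: (size f) => // [[|s]] //= _ lc0; rewrite muU.
Qed.

(* Euclidean step: if f divides g h and r h, it divides (g mod r) h, the
   pseudo-remainder being a combination of g and r. *)
Lemma divides_modp_mul f g h r : divides f (g * h) -> divides f (r * h) ->
  divides f (Pdiv.Idomain.modp g r * h).
Proof.
move=> fgh frh; have Eg := Pdiv.Idomain.divp_eq g r.
set c := lead_coef r ^+ _ in Eg; set q := Pdiv.Idomain.divp g r in Eg.
have -> : Pdiv.Idomain.modp g r = c%:P * g - q * r.
  by rewrite mul_polyC Eg addrAC subrr add0r.
rewrite mulrBl; apply: divides_add; first by rewrite -mulrA; apply: divides_mull.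
by apply: divides_opp; rewrite -mulrA; apply: divides_mull.
Qed.

End GaussLemma.

Section IrreduciblePoly.
Variable A : idomainType.
Variable mu : A -> nat.
Hypothesis mu_size : additive_size mu.
Hypothesis irreducible_prime : forall p : A, irreducible_elt p -> prime_elt p.
Implicit Types (g h q r : {poly A}) (c : A).

(* An irreducible constant polynomial is an irreducible constant, hence
   prime in A and, by Gauss' lemma, in A[X]. *)
Lemma irreducible_polyC_prime c : irreducible_elt c%:P -> prime_elt c%:P.
Proof.
case=> c0 cu cP; rewrite polyC_eq0 in c0; apply/prime_polyC/irreducible_prime.
split=> //; first by move: cu; rewrite poly_unitE size_polyC c0 coefC.
move=> a b Ec; have := cP a%:P b%:P; rewrite Ec polyCM => /(_ erefl).
by rewrite !poly_unitE !coefC /= => -[/andP[_ ->]|/andP[_ ->]]; [left|right].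
Qed.

Variable f : {poly A}.
Hypothesis f_irr : irreducible_elt f.
Hypothesis f_nonconst : (1 < size f)%N.

(* Multiplying f by a nonzero constant does not create new factorizations:
   the prime factors of the constant must go into one of the factors. *)
Lemma scaled_irreducible_factors c : c != 0 -> forall q r, c%:P * f = q * r ->
  (size q <= 1)%N \/ (size r <= 1)%N.
Proof.
have [f0 fu fP] := f_irr; move: c; apply: (nonzero_ind mu_size irreducible_prime).
  move=> c cu q r Ecf.
  have ci0 : c^-1 != 0 by rewrite invr_eq0; apply: contraTneq cu => ->; rewrite unitr0.
  have : f = ((c^-1)%:P * q) * r by rewrite -mulrA -Ecf mulrA -polyCM mulVr // mul1r.
  case/fP=> /unit_poly_size; first by rewrite size_Cmul // => ->; left.
  by move=> ->; right.
move=> p c p_prime c0 IH q r Epcf; have [p0 _ _] := p_prime.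
have pP0 : p%:P != 0 by rewrite polyC_eq0.
have [_ _ pP] := prime_polyC p_prime.
have /pP [[q' Eq]|[r' Er]] : divides p%:P (q * r).
- by exists (c%:P * f); rewrite -Epcf polyCM mulrA.
- have /IH : c%:P * f = q' * r.
    by apply: (mulfI pP0); rewrite /= !mulrA -polyCM Epcf Eq.
  by rewrite Eq size_Cmul.
- have /IH : c%:P * f = q * r'.
    by apply: (mulfI pP0); rewrite /= !mulrA -polyCM Epcf Er mulrCA mulrA.
  by rewrite Er size_Cmul.
Qed.

Lemma irreducible_divides_scaled c : c != 0 ->
  forall g, divides f (c%:P * g) -> divides f g.
Proof.
have [f0 fu fP] := f_irr; move: c; apply: (nonzero_ind mu_size irreducible_prime).
  move=> c cu g [q Ecg]; exists ((c^-1)%:P * q).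
  by rewrite mulrCA -Ecg mulrA -polyCM mulVr // mul1r.
move=> p c p_prime c0 IH g [q Epcg]; have [p0 pu _] := p_prime.
have pP0 : p%:P != 0 by rewrite polyC_eq0.
have [_ _ pP] := prime_polyC p_prime.
have /pP [[f' Ef]|[q' Eq]] : divides p%:P (f * q).
- by exists (c%:P * g); rewrite -Epcg polyCM mulrA.
- case: (fP _ _ Ef) => [|/unit_poly_size sf'].
    by rewrite poly_unitE coefC /= (negbTE pu) andbF.
  by move: f_nonconst; rewrite Ef size_Cmul // sf'.
- apply: IH; exists q'.
  by apply: (mulfI pP0); rewrite /= !mulrA -polyCM Epcg Eq mulrCA mulrA.
Qed.

Section NotDividing.
Variable h : {poly A}.
Hypothesis f_ndvd_h : ~ divides f h.

(* The ideal {r | f divides r h} contains no nonzero element of degree less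
   than that of f: otherwise the Euclidean algorithm applied to f and such an
   element of least degree would produce a factorization of a multiple of f,
   forcing the element to be a constant and then f | h. *)
Lemma no_small_multiplier r : r != 0 -> (size r < size f)%N -> ~ divides f (r * h).
Proof.
have [f0 _ _] := f_irr; have [n] := ubnP (size r); elim: n r => // n IH r.
rewrite ltnS => le_r r0 lt_rf frh.
have fs : divides f (Pdiv.Idomain.modp f r * h).
  by apply: divides_modp_mul frh; exists h.
have lt_sr := Pdiv.Idomain.ltn_modpN0 f r0.
have [s0|s_nz] := eqVneq (Pdiv.Idomain.modp f r) 0; last first.
  by apply: (IH _ _ s_nz) fs; [apply: leq_trans lt_sr le_r|apply: ltn_trans lt_sr lt_rf].
have := Pdiv.Idomain.divp_eq f r; rewrite s0 addr0 -mul_polyC.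
set c := lead_coef r ^+ _; set q := Pdiv.Idomain.divp f r => Ecf.
have c0 : c != 0 by apply: Pdiv.Idomain.lc_expn_scalp_neq0.
have [le_q|le_r1] := scaled_irreducible_factors c0 Ecf.
  have cP0 : c%:P != 0 by rewrite polyC_eq0.
  have q0 : q != 0 by apply: contraNneq (mulf_neq0 cP0 f0) => q0; rewrite Ecf q0 mul0r.
  move: (congr1 (fun t : {poly A} => size t) Ecf) => /=; rewrite size_Cmul // size_mul //.
  by move: le_q lt_rf q0; rewrite -size_poly_eq0; case: (size q) => [|[|]] //; lia.
have [d d0 Erd] : exists2 d, d != 0 & r = d%:P.
  by apply/size_poly1P; move: le_r1 r0; rewrite -size_poly_eq0; case: (size r) => [|[|]].
by apply: f_ndvd_h; apply: (irreducible_divides_scaled d0); rewrite -Erd.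
Qed.

End NotDividing.

(* A nonconstant irreducible polynomial is prime: if f | g h and f does not
   divide h, the pseudo-remainder of g by f lies in the ideal above and is
   therefore zero, so f divides a constant multiple of g. *)
Lemma irreducible_nonconst_prime : prime_elt f.
Proof.
have [f0 fu _] := f_irr; split=> // g h fgh.
have [fh|f_ndvd_h] := classic (divides f h); [by right|left].
have fs : divides f (Pdiv.Idomain.modp g f * h).
  by apply: divides_modp_mul fgh _; exists h.
have [s_nz|s0] := eqVneq (Pdiv.Idomain.modp g f) 0; last first.
  by case: (no_small_multiplier f_ndvd_h s0 (Pdiv.Idomain.ltn_modpN0 g f0) fs).
have := Pdiv.Idomain.divp_eq g f; rewrite s_nz addr0 -mul_polyC.
set c := lead_coef f ^+ _ => Ecg.
apply: (irreducible_divides_scaled (Pdiv.Idomain.lc_expn_scalp_neq0 g f)).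
by rewrite Ecg; exists (Pdiv.Idomain.divp g f); rewrite mulrC.
Qed.

End IrreduciblePoly.

Lemma factorial_poly (A : idomainType) : factorial_domain A -> factorial_domain {poly A}.
Proof.
move=> [irr_prime [mu mu_size]]; split; last first.
  by exists (poly_size mu); apply: poly_size_additive.
move=> f f_irr; have [f0 _ _] := f_irr.
have : (0 < size f)%N by rewrite size_poly_gt0.
rewrite leq_eqVlt => /orP[/eqP sf1|f_nonconst].
  have [c _ Ef] : exists2 c, c != 0 & f = c%:P by apply/size_poly1P; rewrite -sf1.
  by rewrite Ef in f_irr *; apply: irreducible_polyC_prime.
exact: (@irreducible_nonconst_prime _ _ mu_size irr_prime f f_irr f_nonconst).
Qed.

Lemma mpoly_rmorph_eq (R : comNzRingType) n (S : nzRingType)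
    (f g : {rmorphism {mpoly R[n]} -> S}) :
  (forall c, f c%:MP = g c%:MP) -> (forall i, f 'X_i = g 'X_i) -> f =1 g.
Proof.
move=> eqC eqX p; rewrite (mpolyE p) !rmorph_sum; apply: eq_bigr => mon _.
rewrite -mul_mpolyC !rmorphM eqC mpolyXE_id !rmorph_prod; congr (_ * _).
by apply: eq_bigr => i _; rewrite !rmorphXn eqX.
Qed.

Lemma poly_rmorph_eq (R : nzRingType) (S : nzRingType) (f g : {rmorphism {poly R} -> S}) :
  (forall c, f c%:P = g c%:P) -> f 'X = g 'X -> f =1 g.
Proof.
move=> eqC eqX p; rewrite -(coefK p) poly_def !rmorph_sum; apply: eq_bigr => i _.
by rewrite -mul_polyC !rmorphM eqC !rmorphXn eqX.
Qed.

Section LastVariable.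
Variables (k : fieldType) (n : nat).

Definition muni_inv (q : {poly {mpoly k[n]}}) : {mpoly k[n.+1]} :=
  (map_poly (@mwiden n k) q).['X_ord_max].

HB.instance Definition _ := GRing.RMorphism.copy muni_inv
  (horner_eval 'X_ord_max \o map_poly (@mwiden n k)).

Lemma muni_invC c : muni_inv c%:P = mwiden c.
Proof. by rewrite /muni_inv map_polyC hornerC. Qed.

Lemma muni_invX : muni_inv 'X = 'X_ord_max.
Proof. by rewrite /muni_inv map_polyX hornerX. Qed.

Local Notation widen := (widen_ord (leqnSn n)).

Lemma muni_Xwiden (i : 'I_n) : muni ('X_(widen i) : {mpoly k[n.+1]}) = ('X_i)%:P.
Proof.
rewrite muniE msuppX big_seq1 mcoeffX eqxx scale1r.
have -> : (mnm1 (widen i) : 'X_{1..n.+1}) ord_max = 0%N.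
  by rewrite mnmE; case: eqP => // /(congr1 val) /= /eqP; rewrite ltn_eqF.
rewrite expr0 -mul_polyC mulr1; congr (_%:P); congr ('X_[_]).
by apply/mnmP => j; rewrite !mnmE.
Qed.

Lemma muni_Xmax : muni ('X_ord_max : {mpoly k[n.+1]}) = 'X.
Proof.
rewrite muniE msuppX big_seq1 mcoeffX eqxx scale1r mnmE eqxx /=.
have -> : [multinom (mnm1 (@ord_max n) : 'X_{1..n.+1}) (widen i) | i < n] = 0%MM.
  apply/mnmP => i; rewrite !mnmE; case: eqP => // /(congr1 val) /= /eqP.
  by rewrite eq_sym ltn_eqF.
by rewrite mpolyX0 scale1r expr1.
Qed.

Lemma muniK : cancel (@muni n k) muni_inv.
Proof.
move=> p; apply: (@mpoly_rmorph_eq k n.+1 _ (muni_inv \o @muni n k) idfun) => [c|i] /=.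
  by rewrite muniC muni_invC mwidenC.
have [j ->|->] := unliftP ord_max i; last by rewrite muni_Xmax muni_invX.
have -> : lift ord_max j = widen j by apply: val_inj; rewrite /= /bump leqNgt ltn_ord.
by rewrite muni_Xwiden muni_invC mwidenX mnmwiden1.
Qed.

Lemma muni_invK : cancel muni_inv (@muni n k).
Proof.
move=> q; apply: (@poly_rmorph_eq _ _ (@muni n k \o muni_inv) idfun) => [c|] /=; last first.
  by rewrite muni_invX muni_Xmax.
rewrite muni_invC.
move: c; apply: (@mpoly_rmorph_eq k n _ (@muni n k \o @mwiden n k) polyC) => [d|i] /=.
  by rewrite mwidenC muniC.
by rewrite mwidenX mnmwiden1 muni_Xwiden.
Qed.

End LastVariable.

Lemma mpoly_const_unit (k : fieldType) n (p : {mpoly k[n]}) :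
  p != 0 -> (msize p <= 1)%N -> p \is a GRing.unit.
Proof.
move=> p0 /msize1_polyC Ep.
have c0 : p@_0 != 0 by apply: contraNneq p0 => c0; rewrite Ep c0.
by apply/unitrPr; exists ((p@_0)^-1)%:MP; rewrite {1}Ep -mpolyCM divff.
Qed.

Lemma factorial_transfer (A B : idomainType) (f : A -> B) (g : B -> A) :
  {morph f : x y / x * y} -> f 1 = 1 -> f 0 = 0 -> cancel f g -> cancel g f ->
  factorial_domain B -> factorial_domain A.
Proof.
move=> fM f1 f0 fK gK [irr_prime [mu [muM muU]]].
have gM : {morph g : x y / x * y} by move=> x y; rewrite -{1}(gK x) -{1}(gK y) -fM fK.
have fU a : (f a \is a GRing.unit) = (a \is a GRing.unit).
  apply/unitrPr/unitrPr => [[y fay]|[y ay]]; last by exists (f y); rewrite -fM ay f1.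
  by exists (g y); rewrite -{1}(fK a) -gM fay -f1 fK.
have fn0 a : (f a != 0) = (a != 0) by rewrite -f0 (can_eq fK).
split; last first.
  exists (mu \o f); split=> [a b a0 b0|a a0] /=; first by rewrite fM muM ?fn0.
  by rewrite muU ?fn0 // fU.
move=> a [a0 au aP]; have [_ _ faP] : prime_elt (f a).
  apply: irr_prime; split; rewrite ?fn0 ?fU // => x y fa_xy.
  by rewrite -(gK x) -(gK y) !fU; apply: aP; rewrite -gM -fa_xy fK.
split=> // b c [d Ebc]; have /faP : divides (f a) (f b * f c).
  by exists (f d); rewrite -!fM Ebc.
by case=> -[e Ee]; [left|right]; exists (g e); apply: (can_inj fK); rewrite fM gK.
Qed.

Lemma factorial_mpoly (k : fieldType) n : factorial_domain {mpoly k[n]}.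
Proof.
elim: n => [|n IH].
  have unit_nz (p : {mpoly k[0]}) : p != 0 -> p \is a GRing.unit.
    move=> p0; apply: mpoly_const_unit => //; rewrite msizeE.
    apply/bigmax_leqP_seq => mon _ _; rewrite ltnS leqn0 mdeg_eq0.
    by apply/eqP/mnmP => -[].
  split=> [p [p0 pu _]|]; first by rewrite unit_nz in pu.
  by exists (fun=> 0%N); split=> // a a0; rewrite unit_nz.
apply: (factorial_transfer (@muniM n k) (@muni1 n k) (@muni0 n k)).
- exact: muniK.
- exact: muni_invK.
- exact: factorial_poly.
Qed.

Lemma mpoly_irreducible_elt (k : fieldType) n (F : {mpoly k[n]}) :
  mpoly_irreducible F -> irreducible_elt F.
Proof.
case=> F_nc F_irr; have F0 : F != 0 by apply: contraTneq F_nc => ->; rewrite msize0.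
split=> // [|p q EF].
  apply/negP => /andP[/eqP EF _]; have c0 : F@_0 != 0.
    by apply: contraNneq F0 => c0; rewrite EF c0.
  have /eqP sF1 : msize F == 1%N by apply/msize_poly1P; exists F@_0.
  by move: F_nc; rewrite sF1.
have p0 : p != 0 by apply: contraNneq F0 => p0; rewrite EF p0 mul0r.
have q0 : q != 0 by apply: contraNneq F0 => q0; rewrite EF q0 mulr0.
by case: (F_irr p q EF) => ?; [left|right]; apply: mpoly_const_unit.
Qed.

Section Substitution.
Variable k : fieldType.

Lemma comp_mpolyXi n1 n2 (i : 'I_n1) (t : n1.-tuple {mpoly k[n2]}) :
  'X_i \mPo t = tnth t i.
Proof. by rewrite comp_mpolyXU (tnth_nth 0). Qed.

Lemma mpolyXi_neq0 n (i : 'I_n) : ('X_i : {mpoly k[n]}) != 0.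
Proof. by apply/eqP => X0; move: (msizeX k (mnm1 i)); rewrite X0 msize0. Qed.

Lemma dhomog_X n (i : 'I_n) : ('X_i : {mpoly k[n]}) \is 1.-homog.
Proof. by rewrite dhomogX /= mdeg1. Qed.

Lemma comp_mpolyA n1 n2 n3 (G : {mpoly k[n1]}) (t : n1.-tuple {mpoly k[n2]})
    (s : n2.-tuple {mpoly k[n3]}) :
  (G \mPo t) \mPo s = G \mPo [tuple tnth t i \mPo s | i < n1].
Proof.
rewrite (comp_mpolyE G t) (comp_mpolyE G) (raddf_sum (comp_mpoly s)).
apply: eq_bigr => mon _; rewrite /= comp_mpolyZ rmorph_prod; congr (_ *: _).
by apply: eq_bigr => i _; rewrite rmorphXn tnth_map tnth_ord_tuple.
Qed.

Lemma comp_dhomog n1 n2 (G : {mpoly k[n1]}) (t : n1.-tuple {mpoly k[n2]})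
    (w : 'I_n1 -> nat) (D : nat) :
  (forall i, tnth t i \is (w i).-homog) ->
  (forall mon, mon \in msupp G -> (\sum_i w i * mon i)%N = D) ->
  G \mPo t \is D.-homog.
Proof.
move=> t_hom G_hom; rewrite comp_mpolyE big_seq.
apply: rpred_sum => mon G_mon; apply: dhomogZ; rewrite -(G_hom mon G_mon).
elim/big_rec2: _ => [|i d p _ p_hom]; first exact: dhomog1.
by apply: dhomogM => //; apply: dhomogMn.
Qed.

Definition eqmod n (F a b : {mpoly k[n]}) := exists q, a - b = F * q.

Lemma eqmod_refl n (F a : {mpoly k[n]}) : eqmod F a a.
Proof. by exists 0; rewrite subrr mulr0. Qed.

Lemma comp_eqmod n1 n2 (F : {mpoly k[n2]}) (G : {mpoly k[n1]})
    (t t' : n1.-tuple {mpoly k[n2]}) :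
  (forall i, eqmod F (tnth t i) (tnth t' i)) -> eqmod F (G \mPo t) (G \mPo t').
Proof.
have eqmodD a b c d : eqmod F a b -> eqmod F c d -> eqmod F (a + c) (b + d).
  by case=> x Ex [y Ey]; exists (x + y); rewrite mulrDr -Ex -Ey; ring.
have eqmodM a b c d : eqmod F a b -> eqmod F c d -> eqmod F (a * c) (b * d).
  case=> x Ex [y Ey]; exists (x * c + b * y).
  by rewrite mulrDr mulrA -Ex mulrCA -Ey; ring.
have eqmodX a b e : eqmod F a b -> eqmod F (a ^+ e) (b ^+ e).
  move=> ab; elim: e => [|e IH]; last by rewrite !exprS; apply: eqmodM.
  by rewrite !expr0; apply: eqmod_refl.
have eqmodZ c a b : eqmod F a b -> eqmod F (c *: a) (c *: b).
  by case=> x Ex; exists (c *: x); rewrite -scalerBr Ex scalerAr.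
move=> tt'; rewrite !comp_mpolyE.
elim/big_rec2: _ => [|mon x y _ xy]; first exact: eqmod_refl.
apply: eqmodD => //; apply: eqmodZ.
elim/big_rec2: _ => [|i x' y' _ xy']; first exact: eqmod_refl.
by apply: eqmodM => //; apply: eqmodX.
Qed.

End Substitution.

Section Bihomogeneous.
Variables (k : fieldType) (m h : nat).
Local Notation N := (m.+1 + h.+1)%N.

Lemma eq_cat_tuple (T : Type) (t1 t2 : N.-tuple T) :
  (forall i, tnth t1 (lshift h.+1 i) = tnth t2 (lshift h.+1 i)) ->
  (forall j, tnth t1 (rshift m.+1 j) = tnth t2 (rshift m.+1 j)) -> t1 = t2.
Proof.
move=> eq_x eq_y; apply: eq_from_tnth => i; rewrite -(splitK i).
by case: (split i) => j /=; [exact: eq_x|exact: eq_y].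
Qed.

Lemma prod_cat_tuple (S : comNzRingType) (u : m.+1.-tuple S) (v : h.+1.-tuple S)
    (mon : 'X_{1..N}) :
  \prod_(i < N) tnth (cat_tuple u v) i ^+ mon i =
  (\prod_(i < m.+1) tnth u i ^+ mon (lshift h.+1 i)) *
  (\prod_(j < h.+1) tnth v j ^+ mon (rshift m.+1 j)).
Proof.
rewrite big_split_ord /=; congr (_ * _); apply: eq_bigr => i _.
  by rewrite tnth_lshift.
by rewrite tnth_rshift.
Qed.

Definition scale_tuple M (l : {mpoly k[M]}) n (u : n.-tuple {mpoly k[M]}) :=
  [tuple l * tnth u i | i < n].

Lemma comp_bihomog_scale M d e (G : {mpoly k[N]}) (l mu : {mpoly k[M]})
    (u : m.+1.-tuple {mpoly k[M]}) (v : h.+1.-tuple {mpoly k[M]}) :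
  bihomog d e G ->
  G \mPo cat_tuple (scale_tuple l u) (scale_tuple mu v) =
  l ^+ d * mu ^+ e * (G \mPo cat_tuple u v).
Proof.
move=> G_hom; rewrite !comp_mpolyE mulr_sumr; apply: eq_big_seq => mon G_mon.
have [xd yd] := G_hom mon G_mon.
rewrite -scalerAr; congr (_ *: _); rewrite !prod_cat_tuple.
under eq_bigr do rewrite tnth_map tnth_ord_tuple exprMn.
under [X in _ * X]eq_bigr do rewrite tnth_map tnth_ord_tuple exprMn.
rewrite !big_split /= !prodrXr.
move: xd yd; rewrite /xdeg /ydeg => -> ->.
by rewrite mulrACA -!mulrA.
Qed.

Definition unit_tuple M (i : 'I_m.+1) : m.+1.-tuple {mpoly k[M]} :=
  [tuple ((i == j)%:R : {mpoly k[M]}) | j < m.+1].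

Lemma unit_tuple_comp M1 M2 (i j : 'I_m.+1) (t : M1.-tuple {mpoly k[M2]}) :
  tnth (unit_tuple M1 i) j \mPo t = tnth (unit_tuple M2 i) j.
Proof.
by rewrite !tnth_map !tnth_ord_tuple; case: (i == j); rewrite ?comp_mpoly1 ?comp_mpoly0.
Qed.

Lemma sum_eq1_delta n (al : 'I_n -> nat) : (\sum_i al i = 1)%N ->
  exists i0, forall i, al i = (i == i0) :> nat.
Proof.
move=> sum1; have [i0 al_i0] : exists i0, al i0 != 0%N.
  apply: NNPP => all0; move: sum1; rewrite big1 // => i _; apply/eqP.
  by apply: contraT => al_i; case: all0; exists i.
exists i0 => i; move: sum1; rewrite (bigD1 i0) //=.
have [->|ne] := eqVneq i i0; first by move: al_i0; case: (al i0) => // [[|]] //= n0; lia.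
by rewrite (bigD1 i) //=; move: al_i0; case: (al i0) => // s _; lia.
Qed.

Lemma prod_exp_delta (S : comNzRingType) n (w : 'I_n -> S) (al : 'I_n -> nat) i0 :
  (forall i, al i = (i == i0) :> nat) -> \prod_i w i ^+ al i = w i0.
Proof.
move=> al_delta; rewrite (bigD1 i0) //= al_delta eqxx expr1 big1 ?mulr1 // => i ne.
by rewrite al_delta (negbTE ne) expr0.
Qed.

Lemma comp_linear_x M a (F : {mpoly k[N]})
    (u : m.+1.-tuple {mpoly k[M]}) (v : h.+1.-tuple {mpoly k[M]}) :
  bihomog 1 a F ->
  F \mPo cat_tuple u v = \sum_(i < m.+1) tnth u i * (F \mPo cat_tuple (unit_tuple M i) v).
Proof.
move=> F_hom; under [RHS]eq_bigr do rewrite comp_mpolyE mulr_sumr.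
rewrite exchange_big comp_mpolyE /=; apply: eq_big_seq => mon F_mon.
have [/sum_eq1_delta [i0 mon_delta] _] := F_hom mon F_mon.
rewrite prod_cat_tuple (prod_exp_delta _ mon_delta).
rewrite [RHS](bigD1 i0) //= [X in _ + X]big1 ?addr0 => [|i ne].
  rewrite prod_cat_tuple (prod_exp_delta _ mon_delta) tnth_map tnth_ord_tuple eqxx mul1r.
  by rewrite scalerAr.
rewrite prod_cat_tuple (prod_exp_delta _ mon_delta) tnth_map tnth_ord_tuple.
by rewrite (negbTE ne) mul0r scaler0 mulr0.
Qed.

End Bihomogeneous.

(* The construction.  F has bidegree (1, ad) in x_0..x_m, y_0..y_h with
   m = m'.+1, so that F = sum_j x_j g_j(y); i0 is the coordinate solved for
   (the theorem uses an i0 with g_i0 != 0). *)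
Section Parametrization.
Variables (k : fieldType) (m' h ad : nat).
Local Notation m := m'.+1.
Local Notation N := (m.+1 + h.+1)%N.
Local Notation M := (m + h)%N.
Local Notation R := {mpoly k[N]}.
Local Notation S := {mpoly k[M]}.
Variable F : R.
Hypothesis F_hom : bihomog 1 ad F.
Variable i0 : 'I_m.+1.

Definition tvar (x : nat) : S := 'X_(insubd (Ordinal (ltn_addr h (ltn0Sn m'))) x).

Lemma tvarE x (lt_xM : (x < M)%N) : tvar x = 'X_(Ordinal lt_xM).
Proof. by congr 'X__; apply: val_inj; rewrite val_insubd lt_xM. Qed.

Definition phiy : h.+1.-tuple S := [tuple tvar j | j < h.+1].

Definition gt (j : 'I_m.+1) : S := F \mPo cat_tuple (unit_tuple k M j) phiy.

Definition uform (i : 'I_m.+1) : S := if i == i0 then 0 else tvar (h + unbump i0 i).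

(* sum_j u_j g_j(y); subtracting it in coordinate i0 moves g_i0(y) u onto
   the hyperplane sum_j x_j g_j(y) = 0. *)
Definition usum : S := \sum_(j < m.+1) uform j * gt j.

Definition phix : m.+1.-tuple S :=
  [tuple gt i0 * uform i - (if i == i0 then usum else 0) | i < m.+1].

Lemma pullback_F : F \mPo cat_tuple phix phiy = 0.
Proof.
rewrite (comp_linear_x _ _ F_hom).
under eq_bigr do rewrite tnth_map tnth_ord_tuple mulrBl -mulrA.
rewrite sumrB -mulr_sumr -/usum (bigD1 i0) //= eqxx big1 ?addr0 => [|i ne].
  by rewrite mulrC subrr.
by rewrite (negbTE ne) mul0r.
Qed.

Lemma dhomog_gt j : gt j \is ad.-homog.
Proof.
apply: (@comp_dhomog _ _ _ _ _ (fun i : 'I_N => nat_of_bool (m.+1 <= i)%N)).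
  move=> i; rewrite -(splitK i); case: (split i) => l /=.
    rewrite tnth_lshift tnth_map tnth_ord_tuple /= leqNgt ltn_ord /=.
    by case: (j == l); [exact: dhomog1|exact: dhomog0].
  by rewrite tnth_rshift tnth_map tnth_ord_tuple /= leq_addr; apply: dhomog_X.
move=> mon F_mon; have [_ <-] : xdeg mon = 1%N /\ ydeg mon = ad by apply: F_hom.
rewrite /ydeg big_split_ord /=.
rewrite big1 ?add0n => [|i _]; last by rewrite leqNgt ltn_ord.
by apply: eq_bigr => j' _; rewrite leq_addr mul1n.
Qed.

Lemma dhomog_uform i : uform i \is 1.-homog.
Proof. by rewrite /uform; case: (i == i0); [exact: dhomog0|exact: dhomog_X]. Qed.

Lemma dhomog_phix i : tnth phix i \is ad.+1.-homog.
Proof.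
rewrite tnth_map tnth_ord_tuple; apply: rpredB.
  by have := dhomogM (dhomog_gt i0) (dhomog_uform i); rewrite addn1.
case: (i == i0); last exact: rpred0.
by apply: rpred_sum => j _; have := dhomogM (dhomog_uform j) (dhomog_gt j); rewrite add1n.
Qed.

Lemma dhomog_phiy j : tnth phiy j \is 1.-homog.
Proof. by rewrite tnth_map tnth_ord_tuple; apply: dhomog_X. Qed.

(* The map psi from the ambient space back to the source, used to prove that
   phi is dominant onto D. *)

Definition xvar (i : 'I_m.+1) : R := 'X_(lshift h.+1 i).
Definition yvar (j : 'I_h.+1) : R := 'X_(rshift m.+1 j).
Definition xvars : m.+1.-tuple R := [tuple xvar i | i < m.+1].
Definition yvars : h.+1.-tuple R := [tuple yvar j | j < h.+1].

Lemma cat_xvars_yvars : cat_tuple xvars yvars = [tuple 'X_i | i < N].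
Proof.
apply: eq_cat_tuple => [i|j]; rewrite [RHS]tnth_map tnth_ord_tuple.
  by rewrite tnth_lshift tnth_map tnth_ord_tuple.
by rewrite tnth_rshift tnth_map tnth_ord_tuple.
Qed.

(* The coefficient g_j(y) of x_j in F = sum_j x_j g_j(y). *)
Definition gy (j : 'I_m.+1) : R := F \mPo cat_tuple (unit_tuple k N j) yvars.

Lemma F_linear : F = \sum_(j < m.+1) xvar j * gy j.
Proof.
rewrite -{1}(comp_mpoly_id F) -cat_xvars_yvars (comp_linear_x _ _ F_hom).
by apply: eq_bigr => j _; rewrite tnth_map tnth_ord_tuple.
Qed.

Definition xstar : R := xvar (lift i0 ord0).
Definition ylast : R := yvar ord_max.

Lemma xstar_neq0 : xstar != 0. Proof. exact: mpolyXi_neq0. Qed.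
Lemma ylast_neq0 : ylast != 0. Proof. exact: mpolyXi_neq0. Qed.

Definition psi : M.-tuple R := [tuple
  if (t < h)%N then xstar * yvar (insubd ord0 t)
  else ylast * xvar (lift i0 (insubd ord0 (t - h)%N)) | t < M].

Lemma tnth_psi t : tnth psi t = if (t < h)%N then xstar * yvar (insubd ord0 t)
  else ylast * xvar (lift i0 (insubd ord0 (t - h)%N)).
Proof. by rewrite tnth_map tnth_ord_tuple. Qed.

Lemma phiy_psi j : tnth phiy j \mPo psi = xstar * yvar j.
Proof.
have lt_jM : (j < M)%N by move: (ltn_ord j); lia.
rewrite tnth_map tnth_ord_tuple (tvarE lt_jM) comp_mpolyXi tnth_psi /=.
case: ltnP => [lt_jh|le_hj].
  by congr (_ * yvar _); apply: val_inj; rewrite val_insubd ltn_ord.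
have -> : j = ord_max by apply: val_inj => /=; move: (ltn_ord j) le_hj; lia.
rewrite subnn mulrC /xstar /ylast; congr (xvar (lift _ _) * _).
by apply: val_inj; rewrite val_insubd.
Qed.

Definition xdrop (i : 'I_m.+1) : R := if i == i0 then 0 else xvar i.

Lemma F_split : F = xvar i0 * gy i0 + \sum_(j < m.+1) xdrop j * gy j.
Proof.
rewrite {1}F_linear (bigD1 i0) //= [in RHS](bigD1 i0) //= /xdrop eqxx mul0r add0r.
by congr (_ + _); apply: eq_bigr => j ne; rewrite (negbTE ne).
Qed.

Lemma uform_psi i : uform i \mPo psi = ylast * xdrop i.
Proof.
rewrite /uform /xdrop; have [j ->|->] := unliftP i0 i; last first.
  by rewrite eqxx comp_mpoly0 mulr0.
have lt_jM : (h + j < M)%N by rewrite addnC ltn_add2r.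
rewrite eq_sym (negbTE (neq_lift _ _)) bumpK (tvarE lt_jM) comp_mpolyXi tnth_psi /=.
rewrite ltnNge leq_addr /= addKn; congr (_ * xvar (lift _ _)).
by apply: val_inj; rewrite val_insubd ltn_ord.
Qed.

Lemma gt_psi j : gt j \mPo psi = xstar ^+ ad * gy j.
Proof.
rewrite /gt comp_mpolyA.
have -> : [tuple tnth (cat_tuple (unit_tuple k M j) phiy) i \mPo psi | i < N] =
    cat_tuple (scale_tuple 1 (unit_tuple k N j)) (scale_tuple xstar yvars).
  apply: eq_cat_tuple => i; rewrite tnth_map tnth_ord_tuple.
    by rewrite !tnth_lshift unit_tuple_comp [RHS]tnth_map tnth_ord_tuple mul1r.
  by rewrite !tnth_rshift phiy_psi [RHS]tnth_map tnth_ord_tuple tnth_map tnth_ord_tuple.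
by rewrite (comp_bihomog_scale _ _ _ _ F_hom) expr1n mul1r.
Qed.

(* phi o psi is, up to a common factor, (x, y) |-> (w, y) with
   w = g_i0(y) xdrop - (sum_j xdrop_j g_j(y)) e_i0. *)
Definition wform (i : 'I_m.+1) : R :=
  gy i0 * xdrop i - (if i == i0 then \sum_(j < m.+1) xdrop j * gy j else 0).
Definition wtuple : m.+1.-tuple R := [tuple wform i | i < m.+1].

Lemma phix_psi i : tnth phix i \mPo psi = xstar ^+ ad * ylast * wform i.
Proof.
have usum_psi : usum \mPo psi =
    xstar ^+ ad * ylast * \sum_(j < m.+1) xdrop j * gy j.
  rewrite rmorph_sum mulr_sumr; apply: eq_bigr => j _.
  by rewrite rmorphM /= uform_psi gt_psi; ring.
rewrite tnth_map tnth_ord_tuple rmorphB rmorphM /= uform_psi gt_psi /wform.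
case: (i == i0); last by rewrite comp_mpoly0 !subr0; ring.
by rewrite usum_psi; ring.
Qed.

Lemma pullback_psi d e (G : R) : bihomog d e G ->
  (G \mPo cat_tuple phix phiy) \mPo psi =
  (xstar ^+ ad * ylast) ^+ d * xstar ^+ e * (G \mPo cat_tuple wtuple yvars).
Proof.
move=> G_hom; rewrite comp_mpolyA.
have -> : [tuple tnth (cat_tuple phix phiy) i \mPo psi | i < N] =
    cat_tuple (scale_tuple (xstar ^+ ad * ylast) wtuple) (scale_tuple xstar yvars).
  apply: eq_cat_tuple => i; rewrite tnth_map tnth_ord_tuple.
    by rewrite !tnth_lshift phix_psi [RHS]tnth_map tnth_ord_tuple tnth_map tnth_ord_tuple.
  by rewrite !tnth_rshift phiy_psi [RHS]tnth_map tnth_ord_tuple tnth_map tnth_ord_tuple.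
exact: comp_bihomog_scale.
Qed.

Lemma wtuple_eqmod i : eqmod F
  (tnth (cat_tuple (scale_tuple (gy i0) xvars) (scale_tuple 1 yvars)) i)
  (tnth (cat_tuple wtuple yvars) i).
Proof.
rewrite -(splitK i); case: (split i) => j /=; last first.
  by rewrite !tnth_rshift !tnth_map !tnth_ord_tuple mul1r; apply: eqmod_refl.
rewrite !tnth_lshift !tnth_map !tnth_ord_tuple /wform /xdrop.
have [->|ne] := eqVneq j i0; last by rewrite subr0; apply: eqmod_refl.
by exists 1; rewrite mulr1 mulr0 sub0r opprK F_split [in LHS]mulrC.
Qed.

Lemma pullback_vanish_eqmod d e (G : R) : bihomog d e G ->
  G \mPo cat_tuple phix phiy = 0 -> eqmod F (gy i0 ^+ d * G) 0.
Proof.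
move=> G_hom G_phi0.
have c0 : (xstar ^+ ad * ylast) ^+ d * xstar ^+ e != 0.
  by rewrite !(mulf_neq0, expf_neq0) ?xstar_neq0 ?ylast_neq0.
have /esym/eqP := pullback_psi G_hom; rewrite G_phi0 comp_mpoly0 mulf_eq0 (negbTE c0) /=.
have := comp_eqmod G wtuple_eqmod.
rewrite (comp_bihomog_scale _ _ _ _ G_hom) cat_xvars_yvars comp_mpoly_id expr1n mulr1.
by move=> + /eqP G_w0; rewrite G_w0.
Qed.

Lemma exists_gy_neq0 : F != 0 -> exists j, gy j != 0.
Proof.
move=> F0; apply: NNPP => all0; move/eqP: F0; apply; rewrite F_linear big1 // => j _.
by have [->|nz] := eqVneq (gy j) 0; [rewrite mulr0|case: all0; exists j].
Qed.

(* F does not divide any nonzero g_j(y): F vanishes at x = 0 while g_j(y)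
   does not depend on x. *)
Lemma gy_not_multiple j : gy j != 0 -> ~ divides F (gy j).
Proof.
move=> gy0 [q Eq]; set x0 := cat_tuple [tuple (0 : R) | _ < m.+1] yvars.
have F_x0 : F \mPo x0 = 0.
  by rewrite (comp_linear_x _ _ F_hom) big1 // => i _; rewrite tnth_map mul0r.
have gy_x0 : gy j \mPo x0 = gy j.
  rewrite /gy comp_mpolyA; congr (F \mPo _).
  apply: eq_cat_tuple => i; rewrite tnth_map tnth_ord_tuple.
    by rewrite !tnth_lshift unit_tuple_comp.
  by rewrite !tnth_rshift tnth_map tnth_ord_tuple comp_mpolyXi tnth_rshift tnth_map tnth_ord_tuple.
by move: gy0; rewrite -gy_x0 Eq rmorphM /= F_x0 mul0r eqxx.
Qed.

Lemma phix_neq0 : gy i0 != 0 -> tnth phix (lift i0 ord0) != 0.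
Proof.
move=> gy0; have : tnth phix (lift i0 ord0) \mPo psi != 0.
  have ne : (lift i0 ord0 == i0) = false by rewrite eq_sym; apply/negbTE/neq_lift.
  rewrite phix_psi /wform /xdrop ne subr0.
  by rewrite !mulf_neq0 ?expf_neq0 ?xstar_neq0 ?ylast_neq0 ?mpolyXi_neq0.
by apply: contra_neq => ->; rewrite comp_mpoly0.
Qed.

End Parametrization.

Theorem lemma3p19 (k : fieldType) (m h a : nat)
  (char0 : [pchar k]%R =i pred0) (hm : (1 <= m)%N)
  (F : {mpoly k[m.+1 + h.+1]}) (hD : @integral_divisor k m h a F) :
  @unirational_divisor k m h F.
Proof.
case: m hm F hD => [//|m'] _ F [F_hom /mpoly_irreducible_elt F_irr].
have [F0 _ _] := F_irr; have F_prime := (factorial_mpoly k _).1 F F_irr.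
have [i0 gy0] := exists_gy_neq0 F_hom F0.
exists (phix F i0), (phiy k m' h); split.
  exists a.+1, 1%N; split; first exact: dhomog_phix.
  split; first by exists (lift i0 ord0); apply: (phix_neq0 F_hom).
  split; first exact: dhomog_phiy.
  by exists ord0; rewrite tnth_map tnth_ord_tuple mpolyXi_neq0.
split=> [|d e G G_hom G_phi0]; first exact: (pullback_F F_hom).
have [q Eq] := pullback_vanish_eqmod F_hom G_hom G_phi0.
have [_ _ F_dvd] := F_prime.
have /F_dvd [F_gy|//] : divides F (gy F i0 ^+ d * G) by exists q; rewrite -Eq subr0.
by case: (gy_not_multiple F_hom gy0); apply: prime_divides_exp F_gy.
Qed.
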